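(* Let $\varrho$ be a normalized proximate order of order $\rho>0$. Then for every $0<\sigma'<\sigma$ there exists a constant $C(\sigma,\sigma')$ such that $$\|x^\ell\|_{\varrho,\sigma}\le C(\sigma,\sigma')\frac{G_{\varrho,\ell}}{\sigma'^{\ell/\rho}}\qquad\text{for all }\ell\in\mathbb{N}_0.$$
   Context: Paravectors $x=x_0+\sum_{\ell=1}^nx_\ell e_\ell$ in the Clifford algebra $\mathbb{R}_n$ are identified with $\mathbb{R}^{n+1}$, and $|x|$ is the Euclidean norm; $x^\ell$ is the monomial function. A proximate order is a differentiable $\varrho:[0,\infty)\to[0,\infty)$ with $\lim_{r\to\infty}\varrho(r)=\rho>0$ and $\lim_{r\to\infty}\varrho'(r)r\ln r=0$; normalized means $r\mapsto r^{\varrho(r)}$ is strictly increasing on $(0,\infty)$ and tends to $0$ as $r\to0^+$; $\varphi$ is the inverse of $r\mapsto r^{\varrho(r)}$, and $G_{\varrho,0}=1$, $G_{\varrho,\ell}=\varphi(\ell)^\ell/(e\rho)^{\ell/\rho}$ for $\ell\in\mathbb{N}$. For a function $f$ on $\mathbb{R}^{n+1}$ with values in $\mathbb{R}_n$, $\|f\|_{\varrho,\sigma}=\sup_{x\in\mathbb{R}^{n+1}}|f(x)|e^{-\sigma|x|^{\varrho(|x|)}}$. *)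

From HB Require Import structures.
From mathcomp Require Import all_boot all_order all_algebra.
From mathcomp Require Import all_classical all_reals all_analysis.
Set Implicit Arguments. Unset Strict Implicit. Unset Printing Implicit Defensive.
Import Order.TTheory GRing.Theory Num.Theory.
Import numFieldNormedType.Exports.
Local Open Scope classical_set_scope.
Local Open Scope ring_scope.

(* An element is given by its coordinates on the basis e_A, A ⊆ {1..n}
   (here the generators are indexed by 'I_n, i.e. e_{i+1} <-> i : 'I_n). *)
Section Clifford.
Variables (R : realType) (n : nat).

Definition cliff := {ffun {set 'I_n} -> R}.

(* sign of e_A e_B = sign * e_{A Δ B} *)
Definition cl_sign (A B : {set 'I_n}) : R :=
  (-1) ^+ (#|[set p : 'I_n * 'I_n | [&& p.1 \in A, p.2 \in B & (p.2 < p.1)%N]]|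
           + #|A :&: B|).

Definition symdiff (A B : {set 'I_n}) : {set 'I_n} := (A :\: B) :|: (B :\: A).

Definition cl_mul (u v : cliff) : cliff :=
  [ffun C => \sum_(A : {set 'I_n}) \sum_(B : {set 'I_n})
               (if symdiff A B == C then cl_sign A B * u A * v B else 0)].

Definition cl_one : cliff := [ffun A => (A == finset.set0)%:R].

Definition cl_pow (u : cliff) (l : nat) : cliff := iter l (cl_mul u) cl_one.

Definition cl_norm (u : cliff) : R := Num.sqrt (\sum_(A : {set 'I_n}) u A ^+ 2).

(* paravector x = x_0 + sum_l x_l e_l, with x = (x_0,...,x_n) in R^(n+1) *)
Definition paravec (x : 'rV[R]_(n.+1)) : cliff :=
  [ffun A => if A == finset.set0 then x ord0 ord0
             else if [pick i in A] is Some i then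
                    (if A == finset.set1 i then x ord0 (lift ord0 i) else 0)
                  else 0].

Definition eucl (x : 'rV[R]_(n.+1)) : R := Num.sqrt (\sum_(i < n.+1) x ord0 i ^+ 2).

End Clifford.

Section Proximate.
Variable R : realType.

Definition proximate_order (vr : R -> R) (rho : R) : Prop :=
  (forall r, 0 < r -> derivable vr r 1) /\
  cvg ((fun h => h^-1 * (vr h - vr 0)) @ 0^'+) /\
  (forall r, 0 <= r -> 0 <= vr r) /\
  0 < rho /\
  vr @ +oo --> rho /\
  (fun r => derive1 vr r * r * ln r) @ +oo --> 0.

Definition normalized_po (vr : R -> R) : Prop :=
  (forall r s, 0 < r -> r < s -> r `^ vr r < s `^ vr s) /\
  (fun r => r `^ vr r) @ 0^'+ --> 0.

(* phi = inverse of r |-> r^{vr(r)} on (0, oo) *)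
Definition po_inv (vr : R -> R) (y : R) : R :=
  xget 0 [set r | 0 < r /\ r `^ vr r = y].

Definition G_po (vr : R -> R) (rho : R) (l : nat) : R :=
  if l == 0%N then 1
  else po_inv vr l%:R ^+ l / (expR 1 * rho) `^ (l%:R / rho).

Definition po_norm (n : nat) (vr : R -> R) (sigma : R)
    (f : 'rV[R]_(n.+1) -> cliff R n) : \bar R :=
  ereal_sup [set (cl_norm (f x) * expR (- (sigma * (eucl x) `^ vr (eucl x))))%:E
            | x in [set: 'rV[R]_(n.+1)]].

End Proximate.

(* Since the vector part v of a paravector x satisfies v^2 = -|v|^2, the powers
   of x stay in the plane spanned by 1 and v, on which the Clifford product acts
   like complex multiplication; hence |x^l| = |x|^l, and the weighted norm of x^l
   is the supremum over r >= 0 of r^l exp(-sigma V(r)), where V(r) = r^vr(r).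
   Put lam(r) = vr(r) ln r = ln V(r).  As r lam'(r) tends to rho, for exponents
   b < rho < g and large B <= r (resp. r <= B) the increment t = lam(r) - lam(B)
   dominates b ln(r/B) (resp. g ln(r/B)).  Writing V(r) = V(B) e^t with
   V(B) >= l, the Legendre inequality k t - sigma e^t <= k (ln(k/sigma) - 1) for
   k = 1/b or 1/g bounds r^l exp(-sigma V(r)) by (B M)^l, M = (e rho sigma')^(-1/rho),
   provided b and g are close enough to rho that the loss from 1/rho to k is paid
   for by the gap between sigma and sigma'.  Choosing B = max(phi(l), T) gives
   the bound G_l / sigma'^(l/rho) for all l with phi(l) >= T, and the finitely many
   remaining l only enlarge the constant. *)

From HB Require Import structures.
From mathcomp Require Import all_boot all_order all_algebra.
From mathcomp Require Import all_classical all_reals all_analysis.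
From mathcomp Require Import ring lra.
Import Order.TTheory GRing.Theory Num.Theory.
Import numFieldNormedType.Exports.
Set Implicit Arguments. Unset Strict Implicit. Unset Printing Implicit Defensive.
Local Open Scope ring_scope.

Section ParavectorPowers.
Variables (R : realType) (n : nat).
Implicit Types (x y : 'rV[R]_n.+1) (A B C : {set 'I_n}) (i j : 'I_n).

Local Notation set0 := (@finset.set0 'I_n).
Local Notation x0 x := (x ord0 ord0).
Local Notation xv x i := (x ord0 (lift ord0 i)).

Definition vec_norm2 x := \sum_(i < n) xv x i ^+ 2.

Definition pv_span x (p q : R) : 'rV[R]_n.+1 :=
  \row_(j < n.+1) (if j == ord0 then p else q * x ord0 j).

Lemma pv_span0 x p q : x0 (pv_span x p q) = p.
Proof. by rewrite mxE eqxx. Qed.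

Lemma pv_span_lift x p q i : xv (pv_span x p q) i = q * xv x i.
Proof. by rewrite mxE eq_sym (negbTE (neq_lift _ _)). Qed.

Lemma set1_neq0 i : [set i] != set0.
Proof. by apply/eqP => /setP/(_ i); rewrite !inE eqxx. Qed.

Lemma paravec_set0 x : paravec x set0 = x0 x.
Proof. by rewrite ffunE eqxx. Qed.

Lemma paravec_set1 x i : paravec x [set i] = xv x i.
Proof.
rewrite ffunE (negbTE (set1_neq0 i)); case: pickP => [j|/(_ i)]; last by rewrite set11.
by rewrite inE => /eqP ->; rewrite eqxx.
Qed.

Lemma paravec_out x A : A != set0 -> A \notin [set [set i] | i : 'I_n] ->
  paravec x A = 0.
Proof.
move=> A0 /imsetP An; rewrite ffunE (negbTE A0); case: pickP => // j _.
by case: eqP => // Aj; case: An; exists j.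
Qed.

Lemma sum_paravec (F : {set 'I_n} -> R -> R) x : (forall A, F A 0 = 0) ->
  \sum_A F A (paravec x A) = F set0 (x0 x) + \sum_i F [set i] (xv x i).
Proof.
move=> F0; rewrite (bigD1 set0)//= paravec_set0; congr (_ + _).
rewrite (bigID [in [set [set i] | i : 'I_n]]) /= [X in _ + X]big1 ?addr0; last first.
  by move=> A /andP[A0 An]; rewrite paravec_out ?F0.
rewrite (eq_bigl [in [set [set i] | i : 'I_n]]); last first.
  by move=> A; rewrite andb_idl// => /imsetP[i _ ->]; exact: set1_neq0.
rewrite big_imset /=; last by move=> i j _ _; apply: set1_inj.
by apply: eq_bigr => i _; rewrite paravec_set1.
Qed.

Lemma paravecE x C : paravec x C =
  (if set0 == C then x0 x else 0) + \sum_i (if [set i] == C then xv x i else 0).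
Proof.
rewrite -(@sum_paravec (fun A t => if A == C then t else 0) x) => [|A]; last by case: ifP.
by rewrite (bigD1 C)//= eqxx big1 ?addr0// => A /negbTE ->.
Qed.

Lemma symdiff0l B : symdiff set0 B = B.
Proof. by rewrite /symdiff finset.set0D finset.setD0 finset.set0U. Qed.

Lemma symdiff0r B : symdiff B set0 = B.
Proof. by rewrite /symdiff finset.set0D finset.setD0 finset.setU0. Qed.

Lemma symdiffC A B : symdiff A B = symdiff B A.
Proof. by rewrite /symdiff finset.setUC. Qed.

Lemma symdiffxx A : symdiff A A = set0.
Proof. by rewrite /symdiff finset.setDv finset.setU0. Qed.

Lemma card_mkset (T : finType) (b : pred T) : #|[set p | b p]%classic| = #|[pred p | b p]|.
Proof. by apply: eq_card => p; rewrite !inE /=; apply/idP/idP; rewrite in_setE. Qed.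

Lemma cl_sign_set0l B : cl_sign R set0 B = 1.
Proof.
rewrite /cl_sign card_mkset finset.set0I cards0 addn0 eq_card0 ?expr0// => p.
by rewrite !inE.
Qed.

Lemma cl_sign_set0r A : cl_sign R A set0 = 1.
Proof.
rewrite /cl_sign card_mkset finset.setI0 cards0 addn0 eq_card0 ?expr0// => p.
by rewrite !inE andbF.
Qed.

Lemma cl_sign_set1 i j : cl_sign R [set i] [set j] = (-1) ^+ ((j < i)%N + (i == j)).
Proof.
rewrite /cl_sign card_mkset; congr (_ ^+ (_ + _)).
  have [ji|ij] := ltnP j i; rewrite [RHS]/= -?(card1 (i, j)) -?(card0 ('I_n * 'I_n)%type);
    apply: eq_card => -[a b]; rewrite !inE /= ?xpair_eqE;
    by case: eqP => // ->; case: eqP => // ->; rewrite ?ji// ltnNge ij.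
have [<-|ij] := eqVneq i j; rewrite [RHS]/=; first by rewrite finset.setIid cards1.
by apply: eq_card0 => a; rewrite !inE; case: eqP => // ->; exact/negbTE.
Qed.

Lemma cl_sign_set1_id i : cl_sign R [set i] [set i] = -1.
Proof. by rewrite cl_sign_set1 ltnn eqxx expr1. Qed.

Lemma cl_sign_set1C i j : i != j -> cl_sign R [set j] [set i] = - cl_sign R [set i] [set j].
Proof.
move=> ij; rewrite !cl_sign_set1 eq_sym (negbTE ij) !addn0.
case: ltngtP => [_|_|/val_inj eij]; rewrite /= ?expr0 ?expr1 ?opprK//.
by rewrite eij eqxx in ij.
Qed.

Lemma sum_antisym (T : finType) (F : T -> T -> R) :
  (forall a b, a != b -> F b a = - F a b) -> \sum_a \sum_b F a b = \sum_a F a a.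
Proof.
move=> FN; have diag a : \sum_b (F a b + F b a) = F a a *+ 2.
  rewrite (bigD1 a)//= big1 ?addr0 ?mulr2n// => b ba.
  by rewrite (FN a b) ?subrr// eq_sym.
have : (\sum_a \sum_b F a b) *+ 2 = (\sum_a F a a) *+ 2.
  rewrite mulr2n {2}exchange_big -big_split -sumrMnl /=.
  by apply: eq_bigr => a _; rewrite -big_split diag.
by move/(pmulrnI (isT : (0 < 2)%N)).
Qed.

Lemma cl_mul_paravec x y C : cl_mul (paravec x) (paravec y) C =
  (if set0 == C then x0 x * x0 y else 0)
  + \sum_i (if [set i] == C then x0 x * xv y i + xv x i * x0 y else 0)
  + \sum_i \sum_j (if symdiff [set i] [set j] == C
                   then cl_sign R [set i] [set j] * xv x i * xv y j else 0).
Proof.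
pose G A a B t := if symdiff A B == C then cl_sign R A B * a * t else 0.
have G0 A a B : G A a B 0 = 0 by rewrite /G mulr0 if_same.
have inner A a : \sum_B G A a B (paravec y B) = G A a set0 (x0 y) + \sum_j G A a [set j] (xv y j).
  exact: sum_paravec (G0 A a).
rewrite ffunE (@sum_paravec (fun A t => \sum_B G A t B (paravec y B))) => [|A]; last first.
  by apply: big1 => B _; rewrite /G !mulr0 mul0r if_same.
rewrite /= inner; under eq_bigr do rewrite inner.
have -> : G set0 (x0 x) set0 (x0 y) = if set0 == C then x0 x * x0 y else 0.
  by rewrite /G symdiff0l cl_sign_set0l mul1r.
have <- : \sum_j G set0 (x0 x) [set j] (xv y j) + \sum_i G [set i] (xv x i) set0 (x0 y) =
    \sum_i (if [set i] == C then x0 x * xv y i + xv x i * x0 y else 0).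
  rewrite -big_split; apply: eq_bigr => i _ /=.
  by rewrite /G symdiff0l symdiff0r cl_sign_set0l cl_sign_set0r !mul1r; case: ifP; rewrite ?addr0.
by rewrite big_split /= !addrA.
Qed.

Lemma sum_sign_set1_scaled x q C :
  \sum_i \sum_j (if symdiff [set i] [set j] == C
                 then cl_sign R [set i] [set j] * xv x i * (q * xv x j) else 0)
  = if set0 == C then - (q * vec_norm2 x) else 0.
Proof.
rewrite sum_antisym => [|i j ij]; last first.
  by rewrite symdiffC cl_sign_set1C//; case: ifP => _; rewrite ?oppr0//; ring.
under eq_bigr do rewrite symdiffxx cl_sign_set1_id.
case: ifP => _; last by rewrite big1.
by rewrite mulr_sumr -sumrN; apply: eq_bigr => i _; ring.
Qed.

Lemma cl_mul_paravec_span x p q :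
  cl_mul (paravec x) (paravec (pv_span x p q)) =
  paravec (pv_span x (x0 x * p - vec_norm2 x * q) (x0 x * q + p)).
Proof.
apply/ffunP => C; rewrite cl_mul_paravec paravecE !pv_span0.
under eq_bigr do rewrite pv_span_lift.
under [in RHS]eq_bigr do rewrite pv_span_lift.
under [X in _ + X]eq_bigr do under eq_bigr do rewrite pv_span_lift.
rewrite sum_sign_set1_scaled [LHS]addrAC; congr (_ + _).
  by case: ifP => _; rewrite ?addr0//; ring.
by apply: eq_bigr => i _; case: ifP => _; rewrite //; ring.
Qed.

Lemma cl_pow_paravec x l : exists p q,
  cl_pow (paravec x) l = paravec (pv_span x p q) /\
  p ^+ 2 + q ^+ 2 * vec_norm2 x = (x0 x ^+ 2 + vec_norm2 x) ^+ l.
Proof.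
elim: l => [|l [p [q [IH inv]]]].
  exists 1, 0; split; last by rewrite expr0; ring.
  apply/ffunP => C; rewrite ffunE paravecE pv_span0 big1 ?addr0 => [|i _].
    by rewrite eq_sym; case: eqP.
  by rewrite pv_span_lift mul0r if_same.
exists (x0 x * p - vec_norm2 x * q), (x0 x * q + p); split.
  by rewrite /cl_pow iterS -/(cl_pow _ l) IH cl_mul_paravec_span.
by rewrite [RHS]exprS -inv; ring.
Qed.

Lemma cl_norm_paravec y : cl_norm (paravec y) = eucl y.
Proof.
rewrite /cl_norm /eucl (@sum_paravec (fun A t => t ^+ 2)) ?big_ord_recl// => A.
by rewrite expr0n.
Qed.

Lemma cl_norm_pow_paravec x l : cl_norm (cl_pow (paravec x) l) = eucl x ^+ l.
Proof.
have [p [q [-> inv]]] := cl_pow_paravec x l.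
have e_ge0 : 0 <= x0 x ^+ 2 + vec_norm2 x.
  by rewrite addr_ge0 ?sqr_ge0 ?sumr_ge0// => i _; rewrite sqr_ge0.
rewrite cl_norm_paravec /eucl !big_ord_recl pv_span0.
under eq_bigr do rewrite pv_span_lift exprMn.
rewrite -mulr_sumr -/(vec_norm2 x) inv -[in LHS](sqr_sqrtr e_ge0) exprAC sqrtr_sqr.
by rewrite ger0_norm ?exprn_ge0 ?sqrtr_ge0.
Qed.
End ParavectorPowers.

Local Open Scope classical_set_scope.
Local Open Scope ring_scope.

Section RealFacts.
Variable R : realType.
Implicit Types (f : R -> R) (a b c g k r s t u x y : R).

Lemma ln_le_subr1 u : 0 < u -> ln u <= u - 1.
Proof. by move=> u0; have := expR_ge1Dx (ln u); rewrite lnK ?posrE//; lra. Qed.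

Lemma fenchel_expR k s t : 0 < k -> 0 < s ->
  k * t - s * expR t <= k * (ln (k / s) - 1).
Proof.
move=> k0 s0; have q0 : 0 < s * expR t / k by rewrite !mulr_gt0 ?invr_gt0 ?expR_gt0.
have := ler_wpM2l (ltW k0) (ln_le_subr1 q0).
rewrite !lnM ?posrE ?mulr_gt0 ?invr_gt0 ?expR_gt0// !lnV ?posrE// expRK.
have -> : k * (s * expR t / k - 1) = s * expR t - k by field; lra.
lra.
Qed.

Lemma fenchel_expR_le (l s k m u w t : R) : 0 < l -> 0 < s -> 0 < k ->
  k * (ln (k / s) - 1) <= m -> u <= k * t -> l <= w ->
  l * u - s * (w * expR t) <= l * m.
Proof.
move=> l0 s0 k0 km ukt lw.
have := fenchel_expR t k0 s0.
have : s * (l * expR t) <= s * (w * expR t).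
  by rewrite ler_pM2l// ler_pM2r ?expR_gt0.
have : l * u <= l * (k * t) by rewrite ler_pM2l.
nra.
Qed.

Lemma ndecr_sub_mul_ln f c a : 0 < a ->
  (forall r, 0 < r -> derivable f r 1) -> (forall r, a < r -> c <= r * derive1 f r) ->
  forall x y, a <= x -> x <= y -> f x - c * ln x <= f y - c * ln y.
Proof.
move=> a0 df dfc; have dln r : 0 < r -> is_derive r 1 (@ln R) r^-1 := @is_derive1_ln R r.
have dg r : 0 < r -> is_derive r 1 (fun r => f r - c * ln r) (derive1 f r - c / r).
  move=> r0; have := is_deriveB (derivableP (df r r0)) (is_deriveZ c (dln r r0)).
  by rewrite derive1E.
apply: ger0_derive1_ndecry => [r|r|].
- by rewrite in_itv/= andbT => ar; have dgr := dg r (lt_trans a0 ar); exact: ex_derive.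
- rewrite in_itv/= andbT => ar; have r0 := lt_trans a0 ar.
  have dgr := dg r r0; rewrite derive1E derive_val subr_ge0 ler_pdivrMr// mulrC.
  exact: dfc.
- apply: continuous_in_subspaceT => r; rewrite inE/= in_itv/= andbT => ar.
  apply/differentiable_continuous/derivable1_diffP.
  by have dgr := dg r (lt_le_trans a0 ar); exact: ex_derive.
Qed.

Lemma ln_growth f a b g : 0 < a ->
  (forall r, 0 < r -> derivable f r 1) ->
  (forall r, a < r -> b <= r * derive1 f r <= g) ->
  forall x y, a <= x -> x <= y ->
  b * (ln y - ln x) <= f y - f x <= g * (ln y - ln x).
Proof.
move=> a0 df dfbg x y ax xy.
have lo := ndecr_sub_mul_ln a0 df (fun r ar => proj1 (andP (dfbg r ar))) ax xy.
have dNf r : 0 < r -> derivable (- f) r 1 by move=> r0; exact: derivableN (df r r0).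
have dNfg r : a < r -> - g <= r * derive1 (- f) r.
  move=> ar; rewrite derive1N; last exact: df (lt_trans a0 ar).
  by have /andP[_] := dfbg r ar; rewrite -lerN2 -mulrN.
have hi : - f x - - g * ln x <= - f y - - g * ln y :=
  ndecr_sub_mul_ln a0 dNf dNfg ax xy.
by apply/andP; split; lra.
Qed.

Lemma near_exists_lt_gt (P : R -> Prop) x : (\forall y \near x, P y) ->
  exists b g, [/\ b < x, x < g, P b & P g].
Proof.
move=> /nbhs_ballP[e /= e0 He]; exists (x - e / 2), (x + e / 2).
have e20 : 0 < e / 2 by rewrite divr_gt0.
split; [by rewrite gtrBl | by rewrite ltrDl | apply: He | apply: He];
  by rewrite /ball /= ltr_norml; apply/andP; split; lra.
Qed.

Lemma bounded_of_eventually_le1 (K : nat -> R) N : (forall l, 0 <= K l) ->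
  (forall l, (N <= l)%N -> K l <= 1) -> forall l, K l <= 1 + \sum_(j < N) K j.
Proof.
move=> K0 K1 l; have [Nl|lN] := leqP N l.
  by rewrite (le_trans (K1 l Nl))// lerDl sumr_ge0.
rewrite (le_trans _ (ler_wpDl ler01 (lexx _)))// (bigD1 (Ordinal lN))//=.
by rewrite lerDl sumr_ge0.
Qed.
End RealFacts.

Section ProximateOrder.
Variables (R : realType) (vr : R -> R) (rho : R).
Hypotheses (po : proximate_order vr rho) (npo : normalized_po vr).
Implicit Types (a b g r x y : R).

Let lam r := vr r * ln r.

Lemma po_rho_gt0 : 0 < rho.
Proof. by case: po => _ [_ [_ []]]. Qed.

Lemma po_derivable r : 0 < r -> derivable vr r 1.
Proof. by case: po => + _; apply. Qed.

Lemma powR_po r : 0 < r -> r `^ vr r = expR (lam r).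
Proof. by move=> r0; rewrite /powR gt_eqF. Qed.

Lemma is_derive_lam r : 0 < r ->
  is_derive r 1 lam (derive1 vr r * ln r + vr r / r).
Proof.
move=> r0; apply: is_derive_eq.
  exact: is_deriveM (derivableP (po_derivable r0)) (is_derive1_ln r0).
rewrite derive1E.
by change (vr r * r^-1 + ln r * 'D_1 vr r = 'D_1 vr r * ln r + vr r / r); ring.
Qed.

Lemma lam_growth b g : b < rho -> rho < g ->
  exists2 R0, 0 < R0 & forall x y, R0 <= x -> x <= y ->
    b * (ln y - ln x) <= lam y - lam x <= g * (ln y - ln x).
Proof.
move=> brho rhog; case: po => _ [_ [_ [_ [vr_rho vr'_0]]]].
have lim : (fun r => derive1 vr r * r * ln r + vr r) @ +oo --> rho.
  by rewrite -[rho]add0r; apply: cvgD.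
have [M [_ HM]] : \forall r \near +oo, b < derive1 vr r * r * ln r + vr r < g.
  by near=> r; rewrite (near (cvgr_gt _ lim _ brho))// (near (cvgr_lt _ lim _ rhog)).
exists (Num.max 1 M); first by rewrite lt_max ltr01.
apply: ln_growth => [|r r0|r]; first by rewrite lt_max ltr01.
  have dl := is_derive_lam r0; exact: ex_derive.
rewrite gt_max => /andP[r1 Mr]; have r0 := lt_trans ltr01 r1.
have dl := is_derive_lam r0; rewrite derive1E derive_val.
have -> : r * (derive1 vr r * ln r + vr r / r) = derive1 vr r * r * ln r + vr r.
  by field; rewrite gt_eqF.
by case/andP: (HM r Mr) => /ltW -> /ltW ->.
Unshelve. all: by end_near.
Qed.

Lemma po_pow_le a b : 0 < a -> 0 < b -> (a `^ vr a <= b `^ vr b) = (a <= b).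
Proof.
move=> a0 b0; apply: (@le_mono_in _ _ _ _ [pred x | 0 < x] (fun x => x `^ vr x)) => //.
by move=> x y x0 _; apply: npo.1.
Qed.

Lemma po_pow_unbounded y : 0 < y -> exists2 X, 0 < X & y <= X `^ vr X.
Proof.
move=> y0; have rho0 := po_rho_gt0.
have [R0 R00 growth] := @lam_growth (rho / 2) (rho * 2) ltac:(lra) ltac:(lra).
pose X := R0 * expR (`|ln y - lam R0| / (rho / 2)).
have X0 : 0 < X by rewrite mulr_gt0 ?expR_gt0.
have RX : R0 <= X.
  rewrite ler_pMr//; apply: le_trans (expR_ge1Dx _).
  by rewrite lerDl divr_ge0//; lra.
have lnX : ln X - ln R0 = `|ln y - lam R0| / (rho / 2).
  by rewrite lnM ?posrE ?expR_gt0// expRK; lra.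
exists X => //; rewrite powR_po// -[y]lnK ?posrE// ler_expR.
have /andP[+ _] := growth R0 X (lexx _) RX; rewrite lnX.
have := ler_norm (ln y - lam R0).
have -> : rho / 2 * (`|ln y - lam R0| / (rho / 2)) = `|ln y - lam R0|.
  by field; rewrite gt_eqF.
lra.
Qed.

Lemma po_invP y : 0 < y -> 0 < po_inv vr y /\ po_inv vr y `^ vr (po_inv vr y) = y.
Proof.
move=> y0; suff : exists a, 0 < a /\ a `^ vr a = y by move/(xgetPex 0).
have [e [e0 Ve]] : exists e, 0 < e /\ e `^ vr e < y.
  have : \forall e \near 0^'+, 0 < e /\ e `^ vr e < y.
    by near=> e; split; [near: e; exact: nbhs_right_gt | near: e; exact: cvgr_lt npo.2 _ y0].
  by move/(@filter_ex _ _ (at_right_proper_filter 0)).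
have [X X0 VX] := po_pow_unbounded y0.
have eX : e <= X by rewrite -po_pow_le//; apply: ltW; exact: lt_le_trans VX.
have [c /andP[ec _] Vc] : exists2 c, c \in `[e, X] & expR (lam c) = y.
  apply: IVT => //.
    apply: continuous_in_subspaceT => t; rewrite inE/= in_itv/= => /andP[et _].
    have t0 := lt_le_trans e0 et; have dl := is_derive_lam t0.
    apply: continuous_comp; last exact: continuous_expR.
    by apply/differentiable_continuous/derivable1_diffP; exact: ex_derive.
  by rewrite -!powR_po// ge_min le_max (ltW Ve) VX orbT.
by have c0 := lt_le_trans e0 ec; exists c; rewrite powR_po.
Unshelve. all: by end_near.
Qed.

Section Bound.
Variables s s' : R.
Hypotheses (s'0 : 0 < s') (s's : s' < s).

Let M := (expR 1 * rho * s') `^ (- rho^-1).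

Let M_gt0 : 0 < M.
Proof. by rewrite powR_gt0// !mulr_gt0 ?expR_gt0 ?po_rho_gt0. Qed.

Let ln_M : ln M = rho^-1 * (ln (rho^-1 / s') - 1).
Proof.
have rho0 := po_rho_gt0.
rewrite ln_powR !lnM ?posrE ?mulr_gt0 ?expR_gt0 ?invr_gt0// expRK !lnV ?posrE//.
by ring.
Qed.

Lemma exists_exponents_near_rho : exists b g, [/\ 0 < b, b < rho, rho < g,
  b^-1 * (ln (b^-1 / s) - 1) <= ln M & g^-1 * (ln (g^-1 / s) - 1) <= ln M].
Proof.
have rho0 := po_rho_gt0; have s0 := lt_trans s'0 s's.
pose F u := u^-1 * (ln (u^-1 / s) - 1).
have cF : {for rho, continuous F}.
  apply: continuousM; first exact/inv_continuous/lt0r_neq0.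
  apply: continuousB; last exact: cst_continuous.
  apply: continuous_comp.
    by apply: continuousM; [exact/inv_continuous/lt0r_neq0 | exact: cst_continuous].
  by apply: continuous_ln; rewrite divr_gt0 ?invr_gt0.
have Frho : F rho < ln M.
  rewrite ln_M ltr_pM2l ?invr_gt0// ltrBlDr subrK ltr_ln ?posrE ?divr_gt0 ?invr_gt0//.
  by rewrite ltr_pM2l ?invr_gt0// ltf_pV2.
have : \forall u \near rho, 0 < u /\ F u < ln M.
  by near=> u; split; near: u; [exact: cvgr_gt _ cvg_id _ rho0 | exact: cvgr_lt _ cF _ Frho].
move/near_exists_lt_gt => [b [g [brho rhog [b0 Fb] [_ Fg]]]].
by exists b, g; split => //; apply: ltW.
Unshelve. all: by end_near.
Qed.

Lemma po_tail_bound : exists2 T, 0 < T & forall (l : nat) (B r : R),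
  (0 < l)%N -> T <= B -> l%:R <= B `^ vr B -> 0 <= r ->
  r ^+ l * expR (- (s * r `^ vr r)) <= (B * M) ^+ l.
Proof.
have s0 := lt_trans s'0 s's.
have [b [g [b0 brho rhog Fb Fg]]] := exists_exponents_near_rho.
have [R0 R00 growth] := lam_growth brho rhog.
exists (Num.max R0 (R0 / M)) => [|l B r l0]; first by rewrite lt_max R00.
rewrite ge_max ler_pdivrMr// => /andP[RB RBM] lB r0.
have B0 := lt_le_trans R00 RB; have lpos : 0 < l%:R :> R by rewrite ltr0n.
have BM0 : 0 < B * M by rewrite mulr_gt0.
have [rR|Rr] := ltP r R0.
  apply: (@le_trans _ _ (r ^+ l)).
    by rewrite ler_piMr ?exprn_ge0// expR_le1 oppr_le0 mulr_ge0 ?powR_ge0// ltW.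
  by apply: (@le_trans _ _ (R0 ^+ l)); apply: lerXn2r; rewrite ?nnegrE// ltW.
have r1 := lt_le_trans R00 Rr.
rewrite -[r ^+ l]lnK ?posrE ?exprn_gt0// -[(B * M) ^+ l]lnK ?posrE ?exprn_gt0//.
rewrite !lnXn// -expRD ler_expR lnM ?posrE// powR_po// -mulr_natl -[(_ + _) *+ _]mulr_natl.
have lamr : expR (lam r) = expR (lam B) * expR (lam r - lam B) by rewrite -expRD subrKC.
have lB' : l%:R <= expR (lam B) by rewrite -powR_po.
suff [k [k0 Fk ukt]] : exists k, [/\ 0 < k, k * (ln (k / s) - 1) <= ln M &
    ln r - ln B <= k * (lam r - lam B)].
  by have := fenchel_expR_le lpos s0 k0 Fk ukt lB'; rewrite -lamr; lra.
have [Br|rB] := leP B r.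
  exists b^-1; split; rewrite ?invr_gt0// ler_pdivlMl//.
  by case/andP: (growth _ _ RB Br).
exists g^-1; have g0 : 0 < g by rewrite (lt_trans b0)// (lt_trans brho).
split; rewrite ?invr_gt0// ler_pdivlMl//.
by have /andP[_] := growth _ _ Rr (ltW rB); lra.
Qed.

Let M_pow (l : nat) : M ^+ l = ((expR 1 * rho * s') `^ (l%:R / rho))^-1.
Proof.
by rewrite -powR_mulrn ?powR_ge0// -powRrM mulNr -powRN [_ * l%:R]mulrC.
Qed.

Lemma po_pow_exp_bound : exists2 C, 1 <= C & forall (l : nat) r,
  (0 < l)%N -> 0 <= r -> r ^+ l * expR (- (s * r `^ vr r)) <=
    C * (po_inv vr l%:R ^+ l / (expR 1 * rho * s') `^ (l%:R / rho)).
Proof.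
have [T T0 tail] := po_tail_bound.
pose a (l : nat) := po_inv vr l%:R.
have [a_gt0 Va] : (forall l, (0 < l)%N -> 0 < a l) /\
    (forall l, (0 < l)%N -> a l `^ vr (a l) = l%:R).
  by split=> l l0; have [] := po_invP (ltr0Sn _ l.-1); rewrite prednK.
pose K l := (Num.max (a l) T / a l) ^+ l.
have K_ge0 l : 0 <= K l.
  case: l => [|l]; first by rewrite /K expr0.
  apply/exprn_ge0/divr_ge0; first by rewrite le_max (ltW T0) orbT.
  exact/ltW/a_gt0.
pose N := Num.Def.archi_bound (T `^ vr T).
have K_le1 l : (N <= l)%N -> K l <= 1.
  case: l => [|l] Nl; first by rewrite /K expr0.
  have Ta : T <= a l.+1.
    rewrite -po_pow_le ?a_gt0// Va//; apply: ltW; apply: lt_le_trans (archi_boundP _) _.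
      exact: powR_ge0.
    by rewrite ler_nat.
  by rewrite /K (max_idPl Ta) divff ?gt_eqF ?a_gt0// expr1n.
exists (1 + \sum_(j < N) K j) => [|l r l0 r0]; first by rewrite lerDl sumr_ge0.
have a0 := a_gt0 l l0; have aT : a l <= Num.max (a l) T by rewrite le_max lexx.
rewrite -M_pow -exprMn; apply: le_trans (tail l (Num.max (a l) T) r l0 _ _ r0) _.
- by rewrite le_max lexx orbT.
- by rewrite -(Va l l0) po_pow_le// (lt_le_trans a0).
have -> : (Num.max (a l) T * M) ^+ l = K l * (a l * M) ^+ l.
  by rewrite -exprMn mulrA divfK ?lt0r_neq0.
apply: ler_wpM2r; first by rewrite exprn_ge0// mulr_ge0// ltW.
exact: bounded_of_eventually_le1.
Qed.
End Bound.
End ProximateOrder.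

Theorem lemma3p10 (R : realType) (n : nat) (vr : R -> R) (rho : R) :
  proximate_order vr rho -> normalized_po vr ->
  forall sigma sigma' : R, 0 < sigma' -> sigma' < sigma ->
  exists C : R, forall l : nat,
    (po_norm vr sigma (fun x : 'rV[R]_(n.+1) => cl_pow (paravec x) l)
      <= (C * (G_po vr rho l / sigma' `^ (l%:R / rho)))%:E)%E.
Proof.
move=> po npo sigma sigma' s'0 s's; have rho0 := po_rho_gt0 po.
have [C C1 bound] := po_pow_exp_bound po npo s'0 s's.
exists C => l; apply: ge_ereal_sup => _ [x _ <-]; rewrite lee_fin cl_norm_pow_paravec.
case: l => [|l].
  rewrite /G_po/= expr0 mul1r mul0r powRr0 divr1 mulr1; apply: le_trans C1.
  by rewrite expR_le1 oppr_le0 mulr_ge0 ?powR_ge0// (ltW (lt_trans s'0 s's)).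
rewrite /G_po/= -mulrA -invfM -(powRM _ (mulr_ge0 (expR_ge0 1) (ltW rho0)) (ltW s'0)).
exact/bound/sqrtr_ge0.
Qed.
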